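(* Let $f\in\mathbf{SB}_n$ be nonconstant. Then $\deg(f)\ge 2^{\lceil\log_2\mathcal{AI}(f)\rceil}=2^{\lfloor\log_2(2\mathcal{AI}(f)-1)\rfloor}$.
   Context: $\mathbf{SB}_n$ is the set of symmetric Boolean functions on $n$ variables; $\deg$ is the algebraic degree. The algebraic immunity is $\mathcal{AI}(f)=\min\{\deg(g): g\neq0,\ gf=0 \text{ or } g(f+1)=0\}$. *)

From mathcomp Require Import all_boot fingroup perm.
Set Implicit Arguments. Unset Strict Implicit. Unset Printing Implicit Defensive.

Definition bvec (n : nat) := {ffun 'I_n -> bool}.

Definition boolfun (n : nat) := {ffun bvec n -> bool}.

(* ANF coefficient of the monomial prod_{i in S} x_i (Moebius transform):
   a_S = XOR_{x : supp x \subseteq S} f(x). *)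
Definition anf_coef n (f : boolfun n) (S : {set 'I_n}) : bool :=
  \big[addb/false]_(x : bvec n | [forall i, x i ==> (i \in S)]) f x.

(* Algebraic degree: max size of a monomial with nonzero ANF coefficient
   (0 for the zero function). *)
Definition deg n (f : boolfun n) : nat :=
  \max_(S : {set 'I_n} | anf_coef f S) #|S|.

Definition sym_bf n (f : boolfun n) : Prop :=
  forall (s : {perm 'I_n}) (x : bvec n), f [ffun i => x (s i)] = f x.

Definition constant_bf n (f : boolfun n) : Prop :=
  exists b : bool, forall x, f x = b.

(* g is a nonzero annihilator of f or of f+1. *)
Definition ai_witness n (f g : boolfun n) : bool :=
  [exists x, g x] &&
  ([forall x, ~~ (g x && f x)] || [forall x, ~~ (g x && ~~ f x)]).

(* Algebraic immunity: minimum degree of such g (default n, never attained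
   as a default for nonconstant f, since g = f+1 is a witness). *)
Definition AI n (f : boolfun n) : nat :=
  \big[minn/n]_(g : boolfun n | ai_witness f g) deg g.

From mathcomp Require Import all_boot fingroup perm.
Set Implicit Arguments. Unset Strict Implicit. Unset Printing Implicit Defensive.

(* A symmetric f only depends on the weight of its input: f x = q (wt x) for a
   value vector q : nat -> bool (sym_wt_eq, sym_wfun).  The ANF coefficient of
   a monomial of size s of such a function is the s-th forward difference of q
   at 0 over F_2 (anf_weight), and the 2^u-th difference is
   q k + q (k + 2^u) (diffs_pow2).  Consequently:
   - if deg f < 2^t, then q has period 2^t on [0, n] (wfun_periodic);
   - if q k + q (k + 2^u) is constant, then deg <= 2^u (high_diffs_vanish).
   For deg f < 2^(u+1) either some residue class of weights mod 2^u carries a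
   constant value of q, and its indicator is an annihilator of f or f + 1 of
   degree <= 2^u, or q is antiperiodic with antiperiod 2^u and deg f <= 2^u
   itself; in both cases AI f <= 2^u (AI_wfun_le).  Taking u + 1 = ceil(log2 AI)
   gives deg f >= 2^ceil(log2 AI f); the equality of the two exponents is the
   arithmetic identity up_log2_trunc_log. *)

Definition fdiff (h : nat -> bool) : nat -> bool := fun k => h k (+) h k.+1.
Definition diffs (s : nat) (h : nat -> bool) : nat -> bool := iter s fdiff h.

Lemma diffs_local i : forall j g1 g2,
  (forall k, k <= i -> g1 (j + k) = g2 (j + k)) -> diffs i g1 j = diffs i g2 j.
Proof.
elim: i => [|i IH] j g1 g2 Heq /=.
  by have := Heq 0 (leqnn 0); rewrite addn0.
rewrite /fdiff (IH j g1 g2) ?(IH j.+1 g1 g2) // => k Hk.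
  by rewrite addSnnS; apply: Heq.
by apply: Heq; apply: leqW.
Qed.

Lemma diffs_false i : forall g j, (forall k, g k = false) -> diffs i g j = false.
Proof. by elim: i => [|i IH] g j Hg /=; rewrite ?Hg // /fdiff !IH. Qed.

Lemma diffs_shift s : forall h k, diffs s (fun k => h k.+1) k = diffs s h k.+1.
Proof. by elim: s => [|s IH] h k //=; rewrite /fdiff !IH. Qed.

(* Over F_2 the 2^u-th difference only sees two values (Frobenius). *)
Lemma diffs_pow2 u : forall h j, diffs (2 ^ u) h j = h j (+) h (j + 2 ^ u).
Proof.
elim: u => [|u IH] h j; first by rewrite /= addn1.
rewrite expnS mul2n -addnn /diffs iterD -!/(diffs _ _) !IH addnA.
by case: (h j); case: (h (j + 2 ^ u)); case: (h (j + 2 ^ u + 2 ^ u)).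
Qed.

(* Newton interpolation: h k is determined by the differences at 0 of order <= k. *)
Lemma diffs_at0_vanish k : forall h,
  (forall i, i <= k -> diffs i h 0 = false) -> h k = false.
Proof.
elim: k => [|k IH] h Hh; first exact: (Hh 0 (leqnn 0)).
have hk : h k = false by apply: IH => i Hi; apply: Hh; apply: leqW.
have : fdiff h k = false.
  by apply: IH => i Hi; have := Hh i.+1 Hi; rewrite /diffs iterSr.
by rewrite /fdiff hk.
Qed.

Lemma periodic_of_high_diffs t n h :
  (forall s, 2 ^ t <= s <= n -> diffs s h 0 = false) ->
  forall k, k + 2 ^ t <= n -> h (k + 2 ^ t) = h k.
Proof.
move=> Hh k Hk.
have : diffs (2 ^ t) h k = false.
  apply: (@diffs_at0_vanish k (diffs (2 ^ t) h)) => i Hi.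
  rewrite /diffs -iterD; apply: Hh; rewrite leq_addl /=.
  by apply: leq_trans Hk; rewrite leq_add2r.
by rewrite diffs_pow2; case: (h k); case: (h (k + 2 ^ t)).
Qed.

Lemma high_diffs_vanish u N h c :
  (forall k, k + 2 ^ u <= N -> h k (+) h (k + 2 ^ u) = c) ->
  forall s, 2 ^ u < s <= N -> diffs s h 0 = false.
Proof.
move=> Hh s /andP[us sN].
rewrite -(subnK (ltnW us)) /diffs iterD -/(diffs _ _).
rewrite (@diffs_local _ 0 _ (fun _ => c)); last first.
  move=> k Hk; rewrite add0n -/(diffs _ _) diffs_pow2 Hh //.
  by apply: leq_trans sN; rewrite -(subnK (ltnW us)) leq_add2r.
have : 0 < s - 2 ^ u by rewrite subn_gt0.
case: (s - 2 ^ u) => [//|i] _.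
by rewrite /diffs iterSr -/(diffs _ _) diffs_false // => k; rewrite /fdiff addbb.
Qed.

Definition supp n (x : bvec n) : {set 'I_n} := [set i | x i].
Definition wt n (x : bvec n) : nat := #|supp x|.

Lemma wt_le n (x : bvec n) : wt x <= n.
Proof. by rewrite -[leqRHS]card_ord max_card. Qed.

Lemma supp_inj n : injective (@supp n).
Proof.
move=> x y /setP Exy; apply/ffunP=> i.
by have := Exy i; rewrite !inE.
Qed.

Definition prefix n (k : nat) : bvec n := [ffun i : 'I_n => i < k].

Lemma wt_prefix n k : k <= n -> wt (prefix n k) = k.
Proof.
move=> kn; rewrite /wt /supp.
have -> : [set i | prefix n k i] = [set i : 'I_n | i < k].
  by apply/setP=> i; rewrite !inE ffunE.
have -> : [set i : 'I_n | i < k] = widen_ord kn @: [set: 'I_k].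
  apply/setP=> i; rewrite !inE; apply/idP/imsetP => [ik|[j _ ->] /=].
    by exists (Ordinal ik); last apply: val_inj.
  exact: ltn_ord.
rewrite card_imset; first by rewrite cardsT card_ord.
by move=> a b /(congr1 val) ab; apply: val_inj.
Qed.

Lemma card_setD_sym (T : finType) (A B : {set T}) :
  #|A| = #|B| -> #|A :\: B| = #|B :\: A|.
Proof. by move=> AB; rewrite !cardsD AB setIC. Qed.

(* A symmetric Boolean function only depends on the weight of its input:
   move y towards x by transpositions, induction on #|supp x :\: supp y|. *)
Lemma sym_wt_eq n (f : boolfun n) : sym_bf f ->
  forall x y : bvec n, wt x = wt y -> f x = f y.
Proof.
move=> Hf x y; move Hd: #|supp x :\: supp y| => d.
elim/ltn_ind: d x Hd => d IH x Hd Hw.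
have Hd' : #|supp y :\: supp x| = d by rewrite -card_setD_sym.
case: (posnP d) => [d0|dpos].
  suff -> : x = y by [].
  apply: supp_inj; apply/eqP; rewrite eqEsubset -!setD_eq0 -!cards_eq0.
  by rewrite Hd Hd' d0.
have /card_gt0P[i] : 0 < #|supp x :\: supp y| by rewrite Hd.
rewrite !inE => /andP[nyi xi].
have /card_gt0P[j] : 0 < #|supp y :\: supp x| by rewrite Hd'.
rewrite !inE => /andP[nxj yj].
pose x' : bvec n := [ffun k => x (tperm i j k)].
have wx' : wt x' = wt x.
  rewrite /wt -(card_preimset (supp x) (@perm_inj _ (tperm i j))).
  by apply: eq_card => k; rewrite !inE ffunE.
rewrite -(Hf (tperm i j) x); apply: (IH #|supp x' :\: supp y|); rewrite ?wx' //.
rewrite -Hd; apply: (@leq_ltn_trans #|(supp x :\: supp y) :\ i|); last first.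
  by rewrite (cardsD1 i (supp x :\: supp y)) !inE xi nyi.
apply: subset_leq_card; apply/subsetP=> k; rewrite !inE ffunE.
case: (eqVneq k i) => [->|ki]; first by rewrite tpermL (negbTE nxj) andbF.
case: (eqVneq k j) => [->|kj]; first by rewrite yj andbF.
by rewrite tpermD // eq_sym.
Qed.

Definition below n (x : bvec n) (S : {set 'I_n}) : bool := [forall i, x i ==> (i \in S)].

Lemma belowD1 n (x : bvec n) S j : below x (S :\ j) = below x S && ~~ x j.
Proof.
apply/forallP/andP => [H|[/forallP H nxj] i].
  split; first by apply/forallP=> i; apply/implyP=> /(implyP (H i)); rewrite inE => /andP[].
  by apply/negP=> xj; have := implyP (H j) xj; rewrite !inE eqxx.
apply/implyP=> xi; rewrite !inE (implyP (H i) xi) andbT.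
by apply: contraNneq nxj => <-.
Qed.

Definition flip n (j : 'I_n) (x : bvec n) : bvec n :=
  [ffun i => if i == j then ~~ x i else x i].

Lemma flipK n (j : 'I_n) : involutive (flip j).
Proof. by move=> x; apply/ffunP=> i; rewrite !ffunE; case: (i == j); rewrite ?negbK. Qed.

Lemma flip_at n (j : 'I_n) x : flip j x j = ~~ x j.
Proof. by rewrite ffunE eqxx. Qed.

Lemma below_flip n (j : 'I_n) x (S : {set 'I_n}) : j \in S -> below (flip j x) S = below x S.
Proof.
move=> jS; apply: eq_forallb => i; rewrite ffunE.
by case: eqVneq => [->|//]; rewrite jS !implybT.
Qed.

Lemma wt_flip n (j : 'I_n) (x : bvec n) : ~~ x j -> wt (flip j x) = (wt x).+1.
Proof.
move=> nxj; rewrite /wt /supp.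
have -> : [set i | flip j x i] = j |: [set i | x i].
  by apply/setP=> i; rewrite in_setU1 !inE ffunE; case: eqVneq => [->|].
by rewrite cardsU1 inE nxj.
Qed.

(* The ANF coefficients of a function of the weight are iterated differences
   of its value vector: split the sum over x below S according to x j. *)
Lemma anf_weight n (q : nat -> bool) (S : {set 'I_n}) :
  \big[addb/false]_(x : bvec n | below x S) q (wt x) = diffs #|S| q 0.
Proof.
move Hs: #|S| => s; elim: s S q Hs => [|s IH] S q Hs.
  rewrite (cards0_eq Hs) (big_pred1 [ffun => false]) /=.
    by congr q; apply/eqP; rewrite cards_eq0; apply/eqP/setP=> i; rewrite !inE ffunE.
  move=> x; apply/forallP/eqP => [H|-> i]; last by rewrite ffunE.
  by apply/ffunP=> i; rewrite ffunE; apply/negbTE; have := H i; rewrite inE; case: (x i).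
have /card_gt0P[j jS] : 0 < #|S| by rewrite Hs.
have HS' : #|S :\ j| = s by move: Hs; rewrite (cardsD1 j) jS => -[].
rewrite (bigID (fun x : bvec n => x j)) /= addbC.
rewrite (eq_bigl (fun x => below x (S :\ j))) => [|x]; last by rewrite belowD1.
rewrite IH // (reindex_inj (inv_inj (@flipK n j))) /=.
rewrite (eq_big (fun x => below x (S :\ j)) (fun x => q (wt x).+1)); first last.
- by move=> x /andP[_]; rewrite flip_at => nxj; rewrite wt_flip.
- by move=> x; rewrite below_flip // flip_at belowD1.
by rewrite (IH _ (fun k => q k.+1)) // diffs_shift.
Qed.

Definition wfun n (q : nat -> bool) : boolfun n := [ffun x => q (wt x)].

Lemma sym_wfun n (f : boolfun n) :
  sym_bf f -> f = wfun n (fun k => f (prefix n k)).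
Proof.
move=> Hf; apply/ffunP=> x; rewrite ffunE.
by apply: sym_wt_eq; rewrite // wt_prefix // wt_le.
Qed.

Lemma anf_wfun n q S : anf_coef (wfun n q) S = diffs #|S| q 0.
Proof. by rewrite -anf_weight; apply: eq_bigr => x _; rewrite ffunE. Qed.

Lemma deg_wfun_le n q D :
  (forall s, D < s <= n -> diffs s q 0 = false) -> deg (wfun n q) <= D.
Proof.
move=> Hq; apply/bigmax_leqP => S; rewrite anf_wfun; apply: contraTT.
by rewrite -ltnNge => DS; rewrite Hq // DS -[leqRHS]card_ord max_card.
Qed.

(* Conversely, differences at 0 of order in [D, n] vanish when deg < D
   (use the monomial of the prefix set of size s). *)
Lemma high_diffs_above_deg n q D : deg (wfun n q) < D ->
  forall s, D <= s <= n -> diffs s q 0 = false.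
Proof.
move=> HD s /andP[Ds sn]; apply: contraTF HD => Hs; rewrite -leqNgt.
have HS : #|[set i | prefix n s i]| = s by rewrite -/(supp _) -/(wt _) wt_prefix.
apply: leq_trans Ds _; rewrite -{1}HS.
by apply: (leq_bigmax_cond (F := fun S : {set 'I_n} => #|S|)); rewrite anf_wfun HS.
Qed.

Lemma wfun_periodic n q t : deg (wfun n q) < 2 ^ t ->
  forall k, k + 2 ^ t <= n -> q (k + 2 ^ t) = q k.
Proof. by move=> Hd; apply: periodic_of_high_diffs; apply: high_diffs_above_deg. Qed.

Lemma deg_wfun_gt0 n q : ~ constant_bf (wfun n q) -> 0 < deg (wfun n q).
Proof.
move=> Hnc; rewrite lt0n; apply/negP=> /eqP d0; apply: Hnc.
have Hper := @wfun_periodic n q 0; rewrite d0 in Hper.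
have qk : forall k, k <= n -> q k = q 0.
  by elim=> [//|k IH] kn; rewrite -addn1 Hper ?addn1 ?IH // ltnW.
by exists (q 0) => x; rewrite ffunE qk ?wt_le.
Qed.

Lemma periodic_mod (T : Type) (q : nat -> T) n P :
  (forall k, k + P <= n -> q (k + P) = q k) ->
  forall k, k <= n -> q k = q (k %% P).
Proof.
move=> Hq; elim/ltn_ind=> k IH kn.
case: (ltnP k P) => [kP|Pk]; first by rewrite modn_small.
case: (posnP P) => [->|Ppos]; first by rewrite modn0.
rewrite -[in LHS](subnK Pk) Hq ?subnK // IH.
- by rewrite -[in RHS](subnK Pk) modnDr.
- by rewrite ltn_subrL Ppos (leq_trans Ppos Pk).
- exact: leq_trans (leq_subr _ _) kn.
Qed.

Lemma modn_double_cases m k : 0 < m ->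
  let r := k %% m in
  (k %% (m + m) = r /\ (k + m) %% (m + m) = r + m) \/
  (k %% (m + m) = r + m /\ (k + m) %% (m + m) = r).
Proof.
move=> mpos r.
have vm : k %% (m + m) %% m = r by apply: modn_dvdm; rewrite dvdn_add ?dvdnn.
have vlt : k %% (m + m) < m + m by rewrite ltn_pmod // addn_gt0 mpos.
have rm : r < m by rewrite ltn_pmod.
rewrite -(modnDml k m (m + m)).
case: (ltnP (k %% (m + m)) m) => [vsmall|vbig].
  have vr : k %% (m + m) = r by rewrite -vm (modn_small vsmall).
  by left; rewrite vr modn_small // ltn_add2r.
have vr : k %% (m + m) = r + m.
  have vsub : k %% (m + m) - m < m by rewrite ltn_subLR.
  by rewrite -vm -{2}(subnK vbig) modnDr (modn_small vsub) subnK.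
by right; rewrite vr -addnA modnDr modn_small // (leq_trans rm) ?leq_addr.
Qed.

Lemma antiperiodic_of_classes n m (q : nat -> bool) : 0 < m ->
  (forall k, k <= n -> q k = q (k %% (m + m))) ->
  (forall r, r < m -> r <= n -> exists2 k, k <= n & (k %% m == r) && (q k != q r)) ->
  forall k, k + m <= n -> q (k + m) = ~~ q k.
Proof.
move=> mpos Hmod Hcls k km; set r := k %% m.
have kn : k <= n := leq_trans (leq_addr m k) km.
have [k2 k2n /andP[/eqP k2r qk2]] := Hcls r (ltn_pmod k mpos) (leq_trans (leq_mod k m) kn).
have [rmn qrm] : r + m <= n /\ q (r + m) = ~~ q r.
  case: (modn_double_cases k2 mpos) => -[k2v _]; rewrite k2r in k2v.
    by move: qk2; rewrite Hmod // k2v eqxx.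
  split; first by rewrite -k2v (leq_trans (leq_mod _ _) k2n).
  by move: qk2; rewrite Hmod // k2v; case: (q r); case: (q (r + m)).
rewrite (Hmod k) // (Hmod (k + m)) //.
by case: (modn_double_cases k mpos) => -[-> ->]; rewrite -/r ?qrm ?negbK.
Qed.

Lemma bigmin_le (I : eqType) (r : seq I) (P : pred I) (F : I -> nat) d i :
  i \in r -> P i -> \big[minn/d]_(j <- r | P j) F j <= F i.
Proof.
elim: r => [//|a r IH]; rewrite in_cons big_cons => /orP[/eqP <-|ir] Pi.
  by rewrite Pi geq_minl.
case: (P a); last exact: IH.
by rewrite geq_min IH ?orbT.
Qed.

Lemma AI_le n (f g : boolfun n) : ai_witness f g -> AI f <= deg g.
Proof. by move=> Hg; apply: bigmin_le; rewrite ?mem_index_enum. Qed.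

(* A nonzero function annihilates its complement, so is an AI witness. *)
Lemma ai_witness_self n (f : boolfun n) : ~ constant_bf f -> ai_witness f f.
Proof.
move=> Hnc; apply/andP; split.
  case: (boolP [exists x, f x]) => [//|/existsPn Hf]; case: Hnc.
  by exists false => x; apply/negbTE.
by apply/orP; right; apply/forallP=> x; case: (f x).
Qed.

Lemma deg_weight_class n u r : deg (wfun n (fun k => k %% 2 ^ u == r)) <= 2 ^ u.
Proof.
apply: deg_wfun_le; apply: (high_diffs_vanish (c := false)) => k _.
by rewrite modnDr addbb.
Qed.

Lemma ai_witness_class n q m r : r <= n -> r < m ->
  (forall k, k <= n -> k %% m = r -> q k = q r) ->
  ai_witness (wfun n q) (wfun n (fun k => k %% m == r)).
Proof.
move=> rn rm Hcls; apply/andP; split.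
  by apply/existsP; exists (prefix n r); rewrite ffunE wt_prefix // modn_small.
case qr: (q r); [apply/orP; right | apply/orP; left]; apply/forallP=> x;
  by rewrite !ffunE; apply/negP=> /andP[/eqP xr]; rewrite Hcls ?wt_le // qr.
Qed.

(* Its value vector has period 2^(u+1); either some residue class mod 2^u is
   monochromatic (giving an annihilator of degree <= 2^u), or the vector is
   antiperiodic with antiperiod 2^u, which forces deg f <= 2^u. *)
Lemma AI_wfun_le n q u : ~ constant_bf (wfun n q) -> deg (wfun n q) < 2 ^ u.+1 ->
  AI (wfun n q) <= 2 ^ u.
Proof.
move=> Hnc Hd; set m := 2 ^ u.
have mpos : 0 < m by rewrite expn_gt0.
have Hmod : forall k, k <= n -> q k = q (k %% (m + m)).
  by apply: periodic_mod; rewrite /m addnn -mul2n -expnS; apply: wfun_periodic.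
case: (boolP [exists r : 'I_m, (r <= n) &&
               [forall k : 'I_n.+1, (k %% m == r) ==> (q k == q r)]]).
  case/existsP=> r /andP[rn /forallP Hr].
  apply: leq_trans (AI_le (ai_witness_class rn (ltn_ord r) _)) (deg_weight_class n u r).
  by move=> k kn kr; apply/eqP/(implyP (Hr (Ordinal (kn : k < n.+1)))); rewrite /= kr.
rewrite negb_exists => /forallP Hcls.
have Hanti : forall k, k + m <= n -> q (k + m) = ~~ q k.
  apply: antiperiodic_of_classes mpos Hmod _ => r rm rn.
  have := Hcls (Ordinal rm); rewrite /= rn /= negb_forall => /existsP[k].
  by rewrite negb_imply => kr; exists k; rewrite // -ltnS ltn_ord.
apply: leq_trans (AI_le (ai_witness_self Hnc)) _.
apply: deg_wfun_le; apply: (high_diffs_vanish (c := true)) => k km.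
by rewrite Hanti //; case: (q k).
Qed.

Lemma up_log2_trunc_log a : up_log 2 a = trunc_log 2 (2 * a - 1).
Proof.
case: (leqP a 1) => [|a_gt1].
  by case: a => [|[|]] //; rewrite ?up_log0 ?up_log1 ?trunc_log0 ?trunc_log1.
have -> : 2 * a - 1 = (a.-1).*2.+1 by rewrite -(prednK (ltnW a_gt1)) mul2n doubleS.
rewrite up_log_trunc_log // [RHS]trunc_log2S; first by rewrite /= uphalf_double.
by rewrite ltnS double_gt0 -ltnS prednK // ltnW.
Qed.

Theorem corollary8 (n : nat) (f : boolfun n) :
  sym_bf f -> ~ constant_bf f ->
  2 ^ up_log 2 (AI f) <= deg f /\
  2 ^ up_log 2 (AI f) = 2 ^ trunc_log 2 (2 * AI f - 1).
Proof.
move=> Hsym Hnc; split; last by rewrite up_log2_trunc_log.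
rewrite (sym_wfun Hsym) in Hnc *; set F := wfun n _ in Hnc *.
case E: (up_log 2 (AI F)) => [|u]; first exact: deg_wfun_gt0.
rewrite leqNgt; apply/negP=> /(AI_wfun_le Hnc) /(up_log_min (isT : 1 < 2)).
by rewrite E ltnn.
Qed.
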